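(* Let $\mathbf{w_0}=(s_1s_2\cdots s_{n-1})(s_1s_2\cdots s_{n-2})\cdots(s_1s_2)(s_1)$, viewed as a sequence of $n-1$ runs (the $k$-th run being $s_1s_2\cdots s_{n-k}$). Let $\mathbf{w}$ be the positive distinguished subexpression in $\mathbf{w_0}$ for some $w\in S_n$. If, for some $k\ge 2$, $\mathbf{w}$ uses the transposition $s_i$ from the $k$-th run of $\mathbf{w_0}$, then $\mathbf{w}$ also uses the transposition $s_{i+1}$ from the $(k-1)$-st run of $\mathbf{w_0}$.
   Context: $s_i=(i,\,i+1)\in S_n$ are simple transpositions; $\ell(u)$ is the length of $u$ (minimal number of simple transpositions in an expression for $u$); an expression is reduced if it uses $\ell(u)$ transpositions. $v\le w$ in Bruhat order if some reduced expression for $w$ contains a reduced subexpression for $v$. Given a reduced expression $\mathbf{w}=s_{i_1}\cdots s_{i_k}$ for $w$ and $v\le w$, a reduced subexpression $\mathbf{v}=s_{i_{j_1}}\cdots s_{i_{j_m}}$ ($1\le j_1<\dots<j_m\le k$) for $v$ is positive distinguished if, for every $1\le r\le m+1$ and every $p$ with $j_{r-1}\le p<j_r$ (with conventions $j_0=0$, $j_{m+1}=k+1$) such that $\ell(s_{i_p}s_{i_{j_r}}\cdots s_{i_{j_m}})<\ell(s_{i_{j_r}}\cdots s_{i_{j_m}})$, one has $p=j_{r-1}$. For every $v\le w$ and reduced expression of $w$ there is a unique positive distinguished subexpression for $v$ (informally, the leftmost reduced subexpression). *)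

From mathcomp Require Import all_boot all_order all_fingroup.
Set Implicit Arguments. Unset Strict Implicit. Unset Printing Implicit Defensive.
Local Open Scope group_scope.

(* Simple transposition s_i = (i, i+1) in S_n, with the paper's 1-indexing:
   points 1..n of the paper are the ordinals 0..n-1 of 'I_n, so s_i swaps
   ordinals i-1 and i.  For indices outside 1 <= i <= n-1 it is the identity
   (never used: all letters considered are in range). *)
Definition simple_tr (n i : nat) : 'S_n :=
  match @insub nat (fun x => x < n) _ i.-1, @insub nat (fun x => x < n) _ i with
  | Some a, Some b => tperm (a : 'I_n) (b : 'I_n)
  | _, _ => 1
  end.

Definition valid_word (n : nat) (s : seq nat) : bool :=
  all (fun i => (0 < i) && (i < n)) s.

Definition word_prod (n : nat) (s : seq nat) : 'S_n :=
  \prod_(i <- s) simple_tr n i.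

Definition is_expr (n : nat) (s : seq nat) (u : 'S_n) : Prop :=
  valid_word n s /\ word_prod n s = u.

Definition reduced_expr (n : nat) (s : seq nat) (u : 'S_n) : Prop :=
  is_expr s u /\ forall t, is_expr t u -> size s <= size t.

(* l(a) < l(b), with l the minimal number of simple transpositions in an
   expression: some expression of a is shorter than every expression of b. *)
Definition len_lt (n : nat) (a b : 'S_n) : Prop :=
  exists s, is_expr s a /\ forall t, is_expr t b -> size s < size t.

Definition run (n k : nat) : seq nat := iota 1 (n - k).
Definition w0_word (n : nat) : seq nat := flatten [seq run n k | k <- iota 1 n.-1].

(* 0-indexed position in w0_word n of the letter s_i of the k-th run
   (1 <= k <= n-1, 1 <= i <= n-k). *)
Definition w0_pos (n k i : nat) : nat := \sum_(1 <= j < k) (n - j) + i.-1.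

(* A subexpression of w0 is encoded by a bit mask m (size m = size w0):
   position p is used iff nth false m p.  The product of the letters used
   strictly after position p (i.e. s_{i_{j_r}} ... s_{i_{j_m}}, j_r the first
   used position > p). *)
Definition suffix_prod (n : nat) (m : bitseq) (p : nat) : 'S_n :=
  word_prod n (mask (drop p.+1 m) (drop p.+1 (w0_word n))).

(* Positive distinguished condition: for every position p with
   j_{r-1} <= p < j_r and l(s_{i_p} s_{i_{j_r}}...s_{i_{j_m}}) <
   l(s_{i_{j_r}}...s_{i_{j_m}}), one has p = j_{r-1}; equivalently, for every
   position p NOT used by the subexpression the length inequality fails. *)
Definition pos_dist (n : nat) (m : bitseq) : Prop :=
  forall p, p < size (w0_word n) -> ~~ nth false m p ->
    ~ len_lt (simple_tr n (nth 0 (w0_word n) p) * suffix_prod n m p)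
             (suffix_prod n m p).

Definition pds_for (n : nat) (w : 'S_n) (m : bitseq) : Prop :=
  [/\ size m = size (w0_word n),
      reduced_expr (mask m (w0_word n)) w
    & pos_dist n m].

From mathcomp Require Import all_boot all_order all_fingroup.
From mathcomp Require Import zify.
Set Implicit Arguments. Unset Strict Implicit. Unset Printing Implicit Defensive.

(* Let V_p be the product of the letters of the subexpression at positions >= p
   of w0, viewed as a function of the points 0..n-1 (s_j swaps the points j-1
   and j).  Since the subexpression is reduced and positive distinguished, every
   letter s_j of w0, used or not, meets an ascent of V_(p+1) at the points j-1, j,
   and a used letter swaps them.  If s_i is used in run k, then at the start of
   run k some point left of i carries a larger value than the point i.  If s_(i+1)
   is skipped in run k-1, the points 0..i are left alone from there to the start
   of run k, while the ascents met by s_i, ..., s_1 of run k-1 force every point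
   left of i to carry a smaller value than the point i. *)

Local Open Scope group_scope.

Section SimpleTranspositions.

Variable n : nat.
Local Notation N := n.+1.

Lemma simple_trE j : 0 < j < N -> simple_tr N j = tperm (inord j.-1) (inord j).
Proof.
case/andP=> j_gt0 ltjN; have ltj1N : j.-1 < N by lia.
rewrite /simple_tr (insubT (fun x => x < N) ltj1N) (insubT (fun x => x < N) ltjN).
by congr tperm; apply: val_inj; rewrite /= inordK.
Qed.

Lemma simple_tr2 j : 0 < j < N -> simple_tr N j * simple_tr N j = 1.
Proof. by move=> hj; apply/permP => x; rewrite simple_trE // permM tpermK perm1. Qed.

Lemma simple_trK j (x : 'I_N) : 0 < j < N -> simple_tr N j (simple_tr N j x) = x.
Proof. by move=> hj; rewrite simple_trE // tpermK. Qed.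

Lemma simple_tr_fix j (x : 'I_N) : 0 < j < N -> (j < x) || (x.+1 < j) ->
  simple_tr N j x = x.
Proof. by move=> hj hx; rewrite simple_trE // tpermD // -val_eqE /= inordK; lia. Qed.

Lemma simple_tr_lt j i (x : 'I_N) : 0 < j < N -> j < i -> x < i -> simple_tr N j x < i.
Proof.
by move=> hj lt_ji lt_xi; rewrite simple_trE //; case: tpermP => *; rewrite ?inordK; lia.
Qed.

Lemma word_prod_cons j s : word_prod N (j :: s) = simple_tr N j * word_prod N s.
Proof. by rewrite /word_prod big_cons. Qed.

Lemma word_prod_cat s t : word_prod N (s ++ t) = word_prod N s * word_prod N t.
Proof. by rewrite /word_prod big_cat. Qed.

Lemma neq_inord_pred j (u : 'S_N) : 0 < j < N ->
  nat_of_ord (u (inord j.-1)) != u (inord j).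
Proof. by move=> hj; rewrite val_eqE (inj_eq perm_inj) -val_eqE /= !inordK; lia. Qed.

Definition inversions (u : 'S_N) : nat :=
  \sum_(x : 'I_N) \sum_(y : 'I_N) ((x < y) && (u y < u x)).

Lemma inversions1 : inversions 1 = 0.
Proof.
rewrite /inversions big1 // => x _; rewrite big1 // => y _.
by rewrite !perm1; case: ltnP => //= /ltnW; rewrite ltnNge => ->.
Qed.

(* Swapping the adjacent points [a] and [b = a + 1] reorders no pair but {a, b}. *)
Lemma inversion_tperm (a b x y : 'I_N) (u : 'S_N) : b = a.+1 :> nat -> u a < u b ->
  ((tperm a b x < tperm a b y) && (u y < u x))
  = ((x < y) && (u y < u x)) + ((x == b) && (y == a)) :> nat.
Proof.
move=> hb hu; have eqE (c d : 'I_N) : (c == d) = (c == d :> nat) by [].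
rewrite !eqE; case: tpermP => [->|->|/eqP + /eqP]; case: tpermP => [->|->|/eqP + /eqP];
  rewrite ?eqE ?hb; move: hu; lia.
Qed.

Lemma inversions_ascent j (u : 'S_N) : 0 < j < N -> u (inord j.-1) < u (inord j) ->
  inversions (simple_tr N j * u) = (inversions u).+1.
Proof.
move=> hj hu; rewrite simple_trE //.
set a : 'I_N := inord j.-1; set b : 'I_N := inord j.
have hb : b = a.+1 :> nat by rewrite /a /b !inordK; lia.
rewrite -[(inversions u).+1]addn1 /inversions (reindex_inj (@perm_inj _ (tperm a b))).
under eq_bigr => x _ do rewrite (reindex_inj (@perm_inj _ (tperm a b))).
under eq_bigr => x _ do under eq_bigr => y _ do rewrite !permM !tpermK inversion_tperm //.
under eq_bigr => x _ do rewrite big_split /=.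
rewrite big_split /=; congr (_ + _).
rewrite (bigD1 b) //= [X in _ + X]big1 => [|x /negbTE xb]; last first.
  by rewrite big1 // => y _; rewrite xb.
rewrite (bigD1 a) //= [X in _ + X + _]big1 => [|y /negbTE ya]; last by rewrite ya andbF.
by rewrite !eqxx.
Qed.

Lemma inversions_descent j (u : 'S_N) : 0 < j < N -> u (inord j) < u (inord j.-1) ->
  inversions u = (inversions (simple_tr N j * u)).+1.
Proof.
move=> hj hu; have e : u = simple_tr N j * (simple_tr N j * u).
  by rewrite mulgA simple_tr2 // mul1g.
by rewrite {1}e inversions_ascent // !permM simple_trE // tpermL tpermR.
Qed.

Lemma inversions_simple_tr j (u : 'S_N) : 0 < j < N ->
  inversions (simple_tr N j * u) <= (inversions u).+1.
Proof.
move=> hj; case: (ltngtP (u (inord j.-1)) (u (inord j))) (neq_inord_pred u hj) => // hu _.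
  by rewrite inversions_ascent.
by rewrite (inversions_descent hj hu) ltnW.
Qed.

Lemma inversions_word_prod s u : valid_word N s ->
  inversions (word_prod N s * u) <= size s + inversions u.
Proof.
elim: s => [|j s IH] /=; first by rewrite /word_prod big_nil mul1g.
case/andP=> hj /IH hs; rewrite word_prod_cons -mulgA.
by apply: leq_trans (inversions_simple_tr _ hj) _; rewrite addSn ltnS.
Qed.

Lemma inversions_le_expr s u : is_expr s u -> inversions u <= size s.
Proof.
by case=> hs <-; have := inversions_word_prod 1 hs; rewrite mulg1 inversions1 addn0.
Qed.

Lemma perm_ascents_eq1 (u : 'S_N) :
  (forall j, 0 < j < N -> u (inord j.-1) < u (inord j)) -> u = 1.
Proof.
move=> asc.
have ge x : x < N -> x <= u (inord x).
  elim: x => [|x IH] ltxN //; have := asc x.+1 ltxN; have := IH (ltnW ltxN); rewrite /=; lia.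
have le d x : x + d = n -> u (inord x) <= x.
  elim: d x => [|d IH] x; first by rewrite addn0 => ->; rewrite -ltnS.
  by move=> e; have := IH x.+1 ltac:(lia); have := asc x.+1 ltac:(lia); rewrite /=; lia.
apply/permP => x; apply: val_inj; rewrite perm1 /=.
have := ge x (ltn_ord x); have := le (n - x) x ltac:(have := ltn_ord x; lia).
by rewrite inord_val; lia.
Qed.

Lemma perm_descent (u : 'S_N) : u != 1 ->
  exists2 j, 0 < j < N & u (inord j) < u (inord j.-1).
Proof.
move=> nu1; have [/existsP[j /andP[j_gt0 hd]]|/existsPn no_desc] :=
  boolP [exists j : 'I_N, (0 < j) && (u (inord j) < u (inord j.-1))].
  by exists j; rewrite ?j_gt0 ?ltn_ord.
case/eqP: nu1; apply: perm_ascents_eq1 => j hj; case/andP: (hj) => j_gt0 ltjN.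
rewrite ltn_neqAle neq_inord_pred // leqNgt /=.
by have := no_desc (inord j); rewrite inordK // j_gt0.
Qed.

Lemma reduced_word_exists (u : 'S_N) :
  exists s, [/\ valid_word N s, word_prod N s = u & size s = inversions u].
Proof.
have [k] := ubnP (inversions u); elim: k u => // k IH u.
have [->|/perm_descent[j hj hd]] := eqVneq u 1.
  by exists [::]; rewrite /word_prod big_nil inversions1.
rewrite (inversions_descent hj hd) ltnS => /IH[s [hs hsu hsz]].
exists (j :: s); split => /=; first by rewrite hj.
  by rewrite word_prod_cons hsu mulgA simple_tr2 // mul1g.
by rewrite hsz.
Qed.

Lemma inversions_lt_len_lt (a b : 'S_N) : inversions a < inversions b -> len_lt a b.
Proof.
move=> ltab; have [s [hs hsa hsz]] := reduced_word_exists a.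
by exists s; split => [|t /inversions_le_expr]; [split | rewrite hsz; apply: leq_trans].
Qed.

Lemma reduced_expr_inversions s u : reduced_expr s u -> inversions u = size s.
Proof.
case=> he hmin; apply/eqP; rewrite eqn_leq inversions_le_expr //=.
have [t [ht htu <-]] := reduced_word_exists u; exact: hmin.
Qed.

Lemma reduced_word_suffix s t : valid_word N (s ++ t) ->
  inversions (word_prod N (s ++ t)) = size (s ++ t) -> inversions (word_prod N t) = size t.
Proof.
rewrite /valid_word all_cat => /andP[hs ht]; rewrite word_prod_cat size_cat => e.
have := inversions_word_prod (word_prod N t) hs.
have := inversions_le_expr (conj ht (erefl (word_prod N t))); lia.
Qed.

End SimpleTranspositions.

Section SuffixProducts.

Variables (n : nat) (s : seq nat) (m : bitseq).
Local Notation N := n.+1.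
Local Notation letter p := (nth 0 s p).
Local Notation used p := (nth false m p).
Hypotheses (size_m : size m = size s) (valid_s : valid_word N s).

Definition tail_prod p : 'S_N := word_prod N (mask (drop p m) (drop p s)).

Lemma letter_range p : p < size s -> 0 < letter p < N.
Proof. by move=> hp; have := allP valid_s _ (mem_nth 0 hp). Qed.

Lemma tail_prod_step p : p < size s ->
  tail_prod p = (if used p then simple_tr N (letter p) else 1) * tail_prod p.+1.
Proof.
move=> hp; rewrite /tail_prod (drop_nth false) ?size_m // (drop_nth 0) //.
by case: (used p); rewrite /= ?word_prod_cons ?mul1g.
Qed.

Lemma tail_prodE p (x : 'I_N) : p < size s ->
  tail_prod p x = tail_prod p.+1 (if used p then simple_tr N (letter p) x else x).
Proof. by move=> hp; rewrite tail_prod_step // permM; case: (used p); rewrite ?perm1. Qed.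

Lemma tail_prod_fix a b (x : 'I_N) : a <= b <= size s ->
  (forall p, a <= p < b -> (letter p < x) || (x.+1 < letter p)) ->
  tail_prod a x = tail_prod b x.
Proof.
have [d] := ubnP (b - a); elim: d a => // d IH a lt_d hab untouched.
have [lt_ab|] := ltnP a b; last by move=> le_ba; have -> : a = b by lia.
rewrite tail_prodE; last by lia.
have hx := untouched a ltac:(lia).
rewrite (_ : (if _ then _ else _) = x); last first.
  by case: ifP => // _; apply: simple_tr_fix => //; apply: letter_range; lia.
by apply: IH => [||p hp]; [lia | lia | apply: untouched; lia].
Qed.

Lemma tail_prod_below a b i (x : 'I_N) : a <= b <= size s ->
  (forall p, a <= p < b -> letter p < i) -> x < i ->
  exists2 y : 'I_N, y < i & tail_prod a y = tail_prod b x.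
Proof.
move=> + small lt_xi; have [d] := ubnP (b - a); elim: d a small => // d IH a small lt_d hab.
have [lt_ab|le_ba] := ltnP a b; last by exists x => //; have -> : a = b by lia.
have [|||y lt_yi <-] := IH a.+1; [by move=> p hp; apply: small; lia | lia | lia |].
have hj := letter_range (p := a) ltac:(lia).
case ua: (used a); last by exists y; rewrite // tail_prodE ?ua //; lia.
exists (simple_tr N (letter a) y); first by apply: simple_tr_lt => //; apply: small; lia.
by rewrite tail_prodE ?ua ?simple_trK //; lia.
Qed.

Hypothesis reduced_mask : inversions (word_prod N (mask m s)) = size (mask m s).

Lemma inversions_tail_prod p : inversions (tail_prod p) = size (mask (drop p m) (drop p s)).
Proof.
have e : mask m s = mask (take p m) (take p s) ++ mask (drop p m) (drop p s).
  by rewrite -mask_cat ?size_take ?size_m // !cat_take_drop.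
apply: (@reduced_word_suffix _ (mask (take p m) (take p s))); rewrite -e //.
exact: all_mask valid_s.
Qed.

Hypothesis distinguished : forall p, p < size s -> ~~ used p ->
  ~ len_lt (simple_tr N (letter p) * tail_prod p.+1) (tail_prod p.+1).

(* Used letters lengthen the suffix product because the mask is reduced; unused
   ones cannot shorten it by positive distinguishedness. *)
Lemma tail_prod_ascent p : p < size s ->
  tail_prod p.+1 (inord (letter p).-1) < tail_prod p.+1 (inord (letter p)).
Proof.
move=> hp; have hj := letter_range hp.
rewrite ltn_neqAle neq_inord_pred //= leqNgt; apply/negP => desc.
have inv_desc := inversions_descent hj desc.
case up: (used p); last first.
  by apply: (distinguished hp); rewrite ?up //; apply: inversions_lt_len_lt; rewrite inv_desc.
have := inversions_tail_prod p; rewrite tail_prod_step // up.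
rewrite (drop_nth false) ?size_m // (drop_nth 0) // up /= -inversions_tail_prod; lia.
Qed.

Lemma tail_prod_used p : p < size s -> used p ->
  tail_prod p (inord (letter p)) < tail_prod p (inord (letter p).-1).
Proof.
move=> hp up; have hj := letter_range hp.
by rewrite !(tail_prodE _ hp) up simple_trE // tpermR tpermL tail_prod_ascent.
Qed.

Section Runs.

Variables (a : nat) (L : nat).
Hypotheses (run : forall t, t < L -> letter (a + t) = t.+1) (run_end : a + L <= size s).

Lemma run_letter p : a <= p < a + L -> letter p = (p - a).+1.
Proof. by move=> hp; rewrite -run ?subnKC //; lia. Qed.

Lemma run_range t : t < L -> t.+1 < N.
Proof. by move=> lt_tL; have := letter_range (p := a + t) ltac:(lia); rewrite run //; lia. Qed.

(* Reading s_i, ..., s_1 from the right, the value at the point [t] only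
   decreases, and the letter s_(t+1) meets an ascent at the points [t, t+1]. *)
Lemma run_prefix_ascent i : i <= L -> forall x : 'I_N, x < i ->
  tail_prod (a + i) x < tail_prod (a + i) (inord i).
Proof.
move=> le_iL.
have ascent t : t < L -> tail_prod (a + t).+1 (inord t) < tail_prod (a + t).+1 (inord t.+1).
  by move=> lt_tL; have := tail_prod_ascent (p := a + t) ltac:(lia); rewrite run.
have climb t : t <= i -> tail_prod (a + t) (inord t) <= tail_prod (a + i) (inord i).
  have [d] := ubnP (i - t); elim: d t => // d IH t lt_d le_ti.
  have [lt_ti|ge_ti] := ltnP t i; last by have -> : t = i by lia.
  apply: leq_trans (IH t.+1 ltac:(lia) lt_ti); rewrite tail_prodE ?run ?addnS; try lia.
  case: ifP => _; last exact: ltnW (ascent t ltac:(lia)).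
  by rewrite simple_trE /= ?tpermL // run_range //; lia.
move=> x lt_xi; have := climb x.+1 lt_xi; apply: leq_trans.
rewrite -(@tail_prod_fix (a + x.+1)) => [|| p hp].
- by have := ascent x ltac:(lia); rewrite inord_val addnS.
- by lia.
- by rewrite run_letter; lia.
Qed.

Lemma run_used_descent i : 0 < i <= L -> used (a + i.-1) ->
  exists2 y : 'I_N, y < i & tail_prod a (inord i) < tail_prod a y.
Proof.
move=> hi used_i; have lt_iN : i < N by have := run_range (t := i.-1) ltac:(lia); lia.
have letter_i : letter (a + i.-1) = i by rewrite run; lia.
have := tail_prod_used (p := a + i.-1) ltac:(lia) used_i; rewrite letter_i => desc.
have [|||y lt_yi hy] := @tail_prod_below a (a + i.-1) i (inord i.-1).
- by lia.
- by move=> p hp; rewrite run_letter; lia.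
- by rewrite inordK; lia.
exists y => //; rewrite hy (@tail_prod_fix a (a + i.-1)) => [//|| p hp]; first by lia.
by rewrite run_letter ?inordK; lia.
Qed.

Lemma run_unused_ascent i : i < L -> ~~ used (a + i) ->
  forall y : 'I_N, y < i -> tail_prod (a + L) y < tail_prod (a + L) (inord i).
Proof.
move=> lt_iL unused_i y lt_yi.
have lt_iN : i < N by have := run_range lt_iL; lia.
have fixed (x : 'I_N) : x <= i -> tail_prod (a + i) x = tail_prod (a + L) x.
  move=> le_xi; rewrite tail_prodE ?(negbTE unused_i); last by lia.
  by apply: tail_prod_fix => [|p hp]; [lia | rewrite run_letter; lia].
by rewrite -!fixed ?inordK //; [apply: run_prefix_ascent; lia | lia].
Qed.

End Runs.

End SuffixProducts.

Lemma valid_w0_word n : valid_word n (w0_word n).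
Proof. by apply/allP => x /flatten_mapP[k]; rewrite mem_iota /run mem_iota; lia. Qed.

Lemma w0_posE n k i : 0 < i -> w0_pos n k i = w0_pos n k 1 + i.-1.
Proof. by rewrite /w0_pos addn0. Qed.

Lemma w0_pos_next n k : 0 < k -> w0_pos n k.+1 1 = w0_pos n k 1 + (n - k).
Proof. by move=> k_gt0; rewrite /w0_pos !addn0 big_nat_recr. Qed.

Lemma w0_word_runP n k : 1 <= k <= n.-1 ->
  exists pre post, w0_word n = pre ++ run n k ++ post /\ size pre = w0_pos n k 1.
Proof.
move=> hk; exists (flatten [seq run n j | j <- iota 1 k.-1]).
exists (flatten [seq run n j | j <- iota k.+1 (n.-1 - k)]); split.
  rewrite /w0_word {1}(_ : n.-1 = k.-1 + (n.-1 - k).+1); last by lia.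
  by rewrite iotaD map_cat flatten_cat (_ : 1 + k.-1 = k) //; lia.
rewrite size_flatten /shape -map_comp sumnE big_map /w0_pos addn0 /index_iota subn1.
by apply: eq_bigr => j _; rewrite /= /run size_iota.
Qed.

Lemma w0_word_run n k : 1 <= k <= n.-1 ->
  (forall t, t < n - k -> nth 0 (w0_word n) (w0_pos n k 1 + t) = t.+1) /\
  w0_pos n k 1 + (n - k) <= size (w0_word n).
Proof.
move=> /w0_word_runP[pre [post [-> <-]]]; split; last by rewrite !size_cat /run size_iota; lia.
by move=> t ht; rewrite nth_cat ltnNge leq_addr addKn nth_cat /run size_iota ht nth_iota.
Qed.

Theorem mainTheorem8 (n : nat) (w : 'S_n) (m : bitseq) :
  pds_for w m ->
  forall k i, 2 <= k -> k <= n.-1 -> 1 <= i -> i <= n - k ->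
    nth false m (w0_pos n k i) ->
    nth false m (w0_pos n k.-1 i.+1).
Proof.
case: n w m => [|n] w m [size_m red dist] k i k_ge2 k_le i_gt0 i_le used_i; first by lia.
apply: contraT => unused_i.
have reduced := reduced_expr_inversions red.
case: red => [[_ prod_w] _]; rewrite -prod_w in reduced.
have [runK endK] := @w0_word_run n.+1 k.-1 ltac:(lia).
have [runk endk] := @w0_word_run n.+1 k ltac:(lia).
rewrite w0_posE // in used_i; rewrite w0_posE //= in unused_i.
have [|y lt_yi] :=
  run_used_descent size_m (valid_w0_word _) reduced dist runk endk (i := i) _ used_i; first by lia.
have := run_unused_ascent size_m (valid_w0_word _) reduced dist runK endK _ unused_i lt_yi.
by rewrite -w0_pos_next ?prednK; lia.
Qed.
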